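(* For every integer $r\ge0$, \[ \sum_{n=1}^{\infty}\frac{h_n^{(r)}}{n(n+1)\cdots(n+r)}=\frac{\pi^2}{6\,r!}, \] equivalently $\sum_{n=1}^{\infty}h_n^{(r)}B(r+1,n)=\pi^2/6$.
   Context: Hyperharmonic numbers: $h_n^{(0)}=1/n$ for $n\ge1$, and for $r\ge1$, $h_n^{(r)}=\sum_{j=1}^{n}h_j^{(r-1)}$. $B(x,y)=\int_0^1t^{x-1}(1-t)^{y-1}\,dt$ is the Beta function. *)

From Stdlib Require Import Reals.
Open Scope R_scope.

(* Hyperharmonic numbers h_n^{(r)} for n >= 1:
   h_n^{(0)} = 1/n, h_n^{(r)} = sum_{j=1}^n h_j^{(r-1)}.
   At the (unused) index n = 0 we set the value to 0, which is
   consistent with the empty sum for r >= 1. *)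
Fixpoint hyperharmonic (r n : nat) : R :=
  match r with
  | O => match n with O => 0 | S _ => / INR n end
  | S r' =>
      (fix partial (m : nat) : R :=
         match m with
         | O => 0
         | S m' => partial m' + hyperharmonic r' (S m')
         end) n
  end.

Fixpoint rising_prod (n r : nat) : R :=
  match r with
  | O => INR n
  | S r' => rising_prod n r' * INR (n + S r')
  end.

(* Induction on r, all limits being limits of partial sums.
   - r = 0 is the Basel problem sum 1/n^2 = pi^2/6, proved from scratch.  The
     duplication formula csc^2(2y) = (csc^2 y + csc^2(pi/2 - y)) / 4 shows that
     the sum T_N of csc^2 over the 2^N angles (2k+1) pi / 2^(N+2) equals
     2 * 4^N.  As sin x < x < tan x, 1/x^2 lies between csc^2 x - 1 and csc^2 x,
     which squeezes sum 1/(2k+1)^2 to pi^2/8; splitting sum 1/n^2 into odd and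
     even terms then gives pi^2/6.
   - r -> r+1: the telescoping identity
       (r+1) / (n...(n+r+1)) = 1 / (n...(n+r)) - 1 / ((n+1)...(n+r+1))
     and the recursion h_n^{(r+1)} = h_{n-1}^{(r+1)} + h_n^{(r)} give, by
     summation by parts, (r+1) P_{r+1}(N) = P_r(N) - (boundary term), and the
     boundary term is at most H_{N+1}/(N+1), which tends to 0 by Cesaro's lemma. *)
From Stdlib Require Import Reals Lra Lia.
Open Scope R_scope.

Fixpoint psum (g : nat -> R) (n : nat) : R :=
  match n with O => 0 | S m => psum g m + g m end.

Lemma psum_ext (g h : nat -> R) n :
  (forall k, (k < n)%nat -> g k = h k) -> psum g n = psum h n.
Proof.
  induction n as [|n IH]; simpl; intros Hgh; [reflexivity|].
  rewrite IH, Hgh; [reflexivity | lia | intros; apply Hgh; lia].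
Qed.

Lemma psum_add (g : nat -> R) n m :
  psum g (n + m) = psum g n + psum (fun k => g (n + k)%nat) m.
Proof.
  induction m as [|m IH]; simpl.
  - rewrite Nat.add_0_r; ring.
  - rewrite Nat.add_succ_r; simpl; rewrite IH; ring.
Qed.

Lemma psum_rev (g : nat -> R) n :
  psum g n = psum (fun k => g (n - 1 - k)%nat) n.
Proof.
  induction n as [|n IH]; [reflexivity|].
  change (S n) with (1 + n)%nat at 3; rewrite psum_add; simpl.
  rewrite IH,
    (psum_ext (fun k => g (n - 0 - S k)%nat) (fun k => g (n - 1 - k)%nat))
    by (intros; f_equal; lia).
  rewrite !Nat.sub_0_r; ring.
Qed.

Lemma psum_plus (g h : nat -> R) n :
  psum (fun k => g k + h k) n = psum g n + psum h n.
Proof. induction n as [|n IH]; simpl; [|rewrite IH]; ring. Qed.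

Lemma psum_scal (c : R) (g : nat -> R) n :
  psum (fun k => c * g k) n = c * psum g n.
Proof. induction n as [|n IH]; simpl; [|rewrite IH]; ring. Qed.

Lemma psum_const (c : R) n : psum (fun _ => c) n = INR n * c.
Proof. induction n as [|n IH]; simpl psum; [simpl|rewrite IH, S_INR]; ring. Qed.

Lemma psum_le (g h : nat -> R) n :
  (forall k, (k < n)%nat -> g k <= h k) -> psum g n <= psum h n.
Proof.
  induction n as [|n IH]; simpl; intros Hgh; [lra|].
  pose proof (IH (fun k Hk => Hgh k ltac:(lia))); pose proof (Hgh n ltac:(lia)); lra.
Qed.

Lemma psum_mono (g : nat -> R) n m :
  (forall k, 0 <= g k) -> (n <= m)%nat -> psum g n <= psum g m.
Proof.
  intros Hg Hnm; replace m with (n + (m - n))%nat by lia; rewrite psum_add.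
  assert (0 <= psum (fun k => g (n + k)%nat) (m - n)).
  { rewrite <- (Rmult_0_r (INR (m - n))), <- psum_const; apply psum_le; auto. }
  lra.
Qed.

(* Stdlib's sum_f_R0 g n has n + 1 terms. *)
Lemma sum_f_R0_psum (g : nat -> R) n : sum_f_R0 g n = psum g (S n).
Proof. induction n as [|n IH]; simpl in *; [|rewrite IH]; ring. Qed.

Lemma Un_cv_const (c : R) : Un_cv (fun _ => c) c.
Proof.
  intros eps Heps. exists O. intros n _. unfold Rdist. rewrite Rminus_diag, Rabs_R0. lra.
Qed.

Lemma Un_cv_squeeze_0 (u v : nat -> R) :
  (forall n, 0 <= u n <= v n) -> Un_cv v 0 -> Un_cv u 0.
Proof.
  intros Huv Hv eps Heps. destruct (Hv eps Heps) as [N HN]. exists N. intros n Hn.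
  specialize (HN n Hn). specialize (Huv n). unfold Rdist in *.
  rewrite Rminus_0_r in *. rewrite Rabs_right in HN by lra. rewrite Rabs_right; lra.
Qed.

Lemma pow2_pos N : 0 < INR (2 ^ N).
Proof. apply lt_0_INR, Nat.neq_0_lt_0, Nat.pow_nonzero; lia. Qed.

Lemma pow2_succ N : INR (2 ^ S N) = 2 * INR (2 ^ N).
Proof. rewrite Nat.pow_succ_r', mult_INR; reflexivity. Qed.

(* x < tan x on (0, pi/2), by the mean value theorem since tan' = 1 + tan^2 > 1;
   the companion bound sin x < x is Stdlib's sin_lt_x. *)
Lemma x_lt_tan x : 0 < x < PI / 2 -> x < tan x.
Proof.
  intros [Hx0 Hx1].
  destruct (MVT_cor2 tan (fun c => 1 + tan c ^ 2) 0 x Hx0) as [c [Hmvt Hc]].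
  { intros c Hc. apply derive_pt_eq_1 with (derivable_pt_tan c ltac:(lra)).
    apply derive_pt_tan. }
  rewrite tan_0 in Hmvt.
  assert (0 < tan c ^ 2 * x) by (apply Rmult_lt_0_compat; [apply pow_lt, tan_gt_0|]; lra).
  lra.
Qed.

Definition csc2 (x : R) : R := / sin x ^ 2.

Lemma inv_sq_between_csc2 x :
  0 < x < PI / 2 -> csc2 x - 1 <= / x ^ 2 <= csc2 x.
Proof.
  intros Hx. unfold csc2.
  assert (Hs : 0 < sin x) by (apply sin_gt_0; lra).
  assert (Hc : 0 < cos x) by (apply cos_gt_0; lra).
  pose proof (sin_lt_x x ltac:(lra)) as Hsin.
  pose proof (x_lt_tan x Hx) as Htan; unfold tan in Htan.
  assert (Hxcos : x * cos x < sin x).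
  { apply Rmult_lt_reg_r with (/ cos x); [apply Rinv_0_lt_compat; lra|].
    field_simplify; lra. }
  assert (Hcot : / sin x ^ 2 - 1 = (cos x / sin x) ^ 2).
  { pose proof (sin2_cos2 x) as Hsc; unfold Rsqr in Hsc.
    replace ((cos x / sin x) ^ 2) with (cos x ^ 2 / sin x ^ 2) by (field; lra).
    replace (cos x ^ 2) with (1 - sin x ^ 2) by nra. field; lra. }
  rewrite Hcot.
  replace (/ x ^ 2) with ((/ x) ^ 2) by (field; lra).
  replace (/ sin x ^ 2) with ((/ sin x) ^ 2) by (field; lra).
  assert (0 < cos x / sin x < / x).
  { split; [apply Rdiv_lt_0_compat; lra|].
    apply Rmult_lt_reg_r with (x * sin x); [nra|]. field_simplify; lra. }
  assert (0 < / x < / sin x) by (split; [apply Rinv_0_lt_compat | apply Rinv_lt_contravar]; nra).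
  split; nra.
Qed.

Lemma csc2_double y :
  sin y <> 0 -> cos y <> 0 -> csc2 (2 * y) = / 4 * (csc2 y + csc2 (PI / 2 - y)).
Proof.
  intros Hs Hc. unfold csc2. rewrite sin_2a, sin_shift.
  pose proof (sin2_cos2 y) as Hsc; unfold Rsqr in Hsc.
  replace (/ (2 * sin y * cos y) ^ 2)
    with ((sin y * sin y + cos y * cos y) / (4 * (sin y ^ 2 * cos y ^ 2)))
    by (rewrite Hsc; field; lra).
  field; lra.
Qed.

Definition node (N k : nat) : R := PI * INR (2 * k + 1) / (4 * INR (2 ^ N)).

Lemma node_bounds N k : (k < 2 ^ N)%nat -> 0 < node N k < PI / 2.
Proof.
  intros Hk. unfold node. pose proof (pow2_pos N). pose proof PI_RGT_0.
  assert (Hodd : INR (2 * k + 1) < 2 * INR (2 ^ N)).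
  { replace 2 with (INR 2) by reflexivity. rewrite <- mult_INR. apply lt_INR; lia. }
  assert (0 < INR (2 * k + 1)) by (apply lt_0_INR; lia).
  split.
  - apply Rdiv_lt_0_compat; nra.
  - apply Rmult_lt_reg_r with (4 * INR (2 ^ N)); [lra|]. field_simplify; nra.
Qed.

Definition csc2_node_sum (N : nat) : R := psum (fun k => csc2 (node N k)) (2 ^ N).

(* The nodes of level N+1 are the halves of the nodes of level N and their
   reflections in pi/4, hence T_{N+1} = 4 T_N. *)
Lemma csc2_node_sum_succ N : csc2_node_sum (S N) = 4 * csc2_node_sum N.
Proof.
  unfold csc2_node_sum. pose proof (pow2_pos N) as Hn.
  assert (Hsplit : forall k, (k < 2 ^ N)%nat ->
    csc2 (node N k)
    = / 4 * (csc2 (node (S N) k) + csc2 (node (S N) (2 * 2 ^ N - 1 - k)))).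
  { intros k Hk.
    assert (Hk' : (k < 2 ^ S N)%nat) by (rewrite Nat.pow_succ_r'; lia).
    destruct (node_bounds (S N) k Hk') as [Hy0 Hy1].
    assert (Hhalf : node N k = 2 * node (S N) k).
    { unfold node. rewrite pow2_succ. field. lra. }
    assert (Hrefl : node (S N) (2 * 2 ^ N - 1 - k) = PI / 2 - node (S N) k).
    { unfold node. rewrite pow2_succ.
      replace (INR (2 * (2 * 2 ^ N - 1 - k) + 1)) with (4 * INR (2 ^ N) - INR (2 * k + 1)).
      - field. lra.
      - replace 4 with (INR 4) by (simpl; ring). rewrite <- mult_INR, <- minus_INR by lia.
        f_equal. lia. }
    rewrite Hhalf, Hrefl. apply csc2_double.
    + apply Rgt_not_eq, sin_gt_0; lra.
    + apply Rgt_not_eq, cos_gt_0; lra. }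
  rewrite (psum_ext _ _ _ Hsplit), psum_scal, psum_plus.
  replace (2 ^ S N)%nat with (2 ^ N + 2 ^ N)%nat by (rewrite Nat.pow_succ_r'; lia).
  rewrite psum_add, (psum_rev (fun k => csc2 (node (S N) (2 ^ N + k)))).
  rewrite (psum_ext (fun k => csc2 (node (S N) (2 * 2 ^ N - 1 - k)))
                    (fun k => csc2 (node (S N) (2 ^ N + (2 ^ N - 1 - k)))))
    by (intros; do 2 f_equal; lia).
  field.
Qed.

Lemma csc2_node_sum_0 : csc2_node_sum 0 = 2.
Proof.
  unfold csc2_node_sum, csc2, node. simpl psum.
  match goal with |- context [sin ?a] => replace a with (PI / 4) by (simpl; field) end.
  rewrite sin_PI4. assert (Hs : sqrt 2 * sqrt 2 = 2) by (apply sqrt_sqrt; lra).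
  assert (0 < sqrt 2) by (apply sqrt_lt_R0; lra).
  replace (0 + / (1 / sqrt 2 * (1 / sqrt 2 * 1))) with (sqrt 2 * sqrt 2) by (field; lra). lra.
Qed.

Lemma csc2_node_sum_val N : csc2_node_sum N = 2 * INR (2 ^ N) ^ 2.
Proof.
  induction N as [|N IH].
  - rewrite csc2_node_sum_0; simpl; ring.
  - rewrite csc2_node_sum_succ, IH, pow2_succ; ring.
Qed.

Definition odd_sq_sum (m : nat) : R := psum (fun k => / INR (2 * k + 1) ^ 2) m.

Lemma odd_sq_sum_mono m1 m2 : (m1 <= m2)%nat -> odd_sq_sum m1 <= odd_sq_sum m2.
Proof.
  intros; apply psum_mono; auto.
  intros k; apply Rlt_le, Rinv_0_lt_compat, pow_lt, lt_0_INR; lia.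
Qed.

(* Summing the squeeze of 1/x^2 at the nodes of level N, with
   1/(node N k)^2 = (16 4^N / pi^2) / (2k+1)^2 and T_N = 2 * 4^N. *)
Lemma odd_sq_sum_pow2_bounds N :
  PI ^ 2 / 8 - PI ^ 2 / (16 * INR (2 ^ N)) <= odd_sq_sum (2 ^ N) <= PI ^ 2 / 8.
Proof.
  pose proof (pow2_pos N) as Hn. pose proof PI_RGT_0 as Hpi.
  set (c := 16 * INR (2 ^ N) ^ 2 / PI ^ 2).
  assert (Hc : 0 < c) by (unfold c; apply Rdiv_lt_0_compat; nra).
  assert (Hterm : forall k, (k < 2 ^ N)%nat ->
            csc2 (node N k) - 1 <= c * / INR (2 * k + 1) ^ 2 <= csc2 (node N k)).
  { intros k Hk.
    replace (c * / INR (2 * k + 1) ^ 2) with (/ node N k ^ 2).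
    - apply inv_sq_between_csc2, node_bounds, Hk.
    - assert (0 < INR (2 * k + 1)) by (apply lt_0_INR; lia).
      unfold c, node. field. lra. }
  assert (Hlow : csc2_node_sum N - INR (2 ^ N) <= c * odd_sq_sum (2 ^ N)).
  { replace (csc2_node_sum N - INR (2 ^ N))
      with (psum (fun k => csc2 (node N k) + -1) (2 ^ N))
      by (rewrite psum_plus, psum_const; unfold csc2_node_sum; ring).
    unfold odd_sq_sum. rewrite <- psum_scal.
    apply psum_le. intros k Hk. specialize (Hterm k Hk). lra. }
  assert (Hup : c * odd_sq_sum (2 ^ N) <= csc2_node_sum N).
  { unfold csc2_node_sum, odd_sq_sum. rewrite <- psum_scal.
    apply psum_le. intros k Hk. apply Hterm, Hk. }
  rewrite csc2_node_sum_val in Hlow, Hup.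
  split; apply Rmult_le_reg_l with c; auto.
  - apply Rle_trans with (2 * INR (2 ^ N) ^ 2 - INR (2 ^ N)); [|exact Hlow].
    right. unfold c. field. lra.
  - apply Rle_trans with (2 * INR (2 ^ N) ^ 2); [exact Hup|].
    right. unfold c. field. lra.
Qed.

(* sum_k 1/(2k+1)^2 = pi^2/8: the partial sums increase, lie below pi^2/8,
   and at index 2^N are within pi^2/(16 * 2^N) of it. *)
Lemma odd_sq_sum_cv : Un_cv odd_sq_sum (PI ^ 2 / 8).
Proof.
  intros eps Heps. pose proof PI_RGT_0.
  destruct (INR_unbounded (PI ^ 2 / (16 * eps))) as [N HN].
  exists (2 ^ N)%nat. intros m Hm. unfold Rdist.
  assert (HN2 : INR N < INR (2 ^ N)) by (apply lt_INR, Nat.pow_gt_lin_r; lia).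
  pose proof (pow2_pos N).
  destruct (odd_sq_sum_pow2_bounds N) as [Hlow _].
  destruct (odd_sq_sum_pow2_bounds m) as [_ Hup].
  pose proof (odd_sq_sum_mono (2 ^ N) m ltac:(lia)).
  pose proof (odd_sq_sum_mono m (2 ^ m) (Nat.lt_le_incl _ _ (Nat.pow_gt_lin_r 2 m ltac:(lia)))).
  assert (PI ^ 2 / (16 * INR (2 ^ N)) < eps).
  { apply Rmult_lt_reg_r with (16 * INR (2 ^ N) / eps); [apply Rdiv_lt_0_compat; lra|].
    replace (PI ^ 2 / (16 * INR (2 ^ N)) * (16 * INR (2 ^ N) / eps))
      with (16 * (PI ^ 2 / (16 * eps))) by (field; lra).
    replace (eps * (16 * INR (2 ^ N) / eps)) with (16 * INR (2 ^ N)) by (field; lra).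
    lra. }
  rewrite Rabs_left1; lra.
Qed.

Definition zeta2_sum (m : nat) : R := psum (fun j => / INR (S j) ^ 2) m.

(* Splitting 1, ..., 2m into odd and even parts. *)
Lemma zeta2_sum_double m : zeta2_sum (2 * m) = odd_sq_sum m + / 4 * zeta2_sum m.
Proof.
  induction m as [|m IH].
  - unfold zeta2_sum, odd_sq_sum; simpl; ring.
  - replace (2 * S m)%nat with (S (S (2 * m))) by lia.
    unfold zeta2_sum, odd_sq_sum in *; cbn [psum]; rewrite IH.
    replace (INR (S (S (2 * m)))) with (2 * INR (S m))
      by (rewrite <- (mult_INR 2); f_equal; lia).
    replace (INR (S (2 * m))) with (INR (2 * m + 1)) by (f_equal; lia).
    assert (0 < INR (S m)) by (apply lt_0_INR; lia).
    assert (0 < INR (2 * m + 1)) by (apply lt_0_INR; lia).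
    field; lra.
Qed.

Lemma zeta2_sum_mono m1 m2 : (m1 <= m2)%nat -> zeta2_sum m1 <= zeta2_sum m2.
Proof.
  intros; apply psum_mono; auto.
  intros k; apply Rlt_le, Rinv_0_lt_compat, pow_lt, lt_0_INR; lia.
Qed.

(* The Basel problem: sum_{n >= 1} 1/n^2 = pi^2/6.  The partial sums Z_m
   increase and are bounded (3/4 Z_m <= Z_{2m} - 1/4 Z_m <= pi^2/8), so they
   converge to some l; then Z_{2m} - 1/4 Z_m tends both to 3l/4 and to pi^2/8. *)
Lemma basel : Un_cv zeta2_sum (PI ^ 2 / 6).
Proof.
  assert (Hgrow : Un_growing zeta2_sum) by (intros m; apply zeta2_sum_mono; lia).
  assert (Hbound : has_ub zeta2_sum).
  { exists (PI ^ 2 / 6). intros x [m ->].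
    pose proof (zeta2_sum_mono m (2 * m) ltac:(lia)) as Hm.
    rewrite zeta2_sum_double in Hm.
    destruct (odd_sq_sum_pow2_bounds m) as [_ Hup].
    pose proof (odd_sq_sum_mono m (2 ^ m) (Nat.lt_le_incl _ _ (Nat.pow_gt_lin_r 2 m ltac:(lia)))).
    lra. }
  destruct (growing_cv zeta2_sum Hgrow Hbound) as [l Hl].
  assert (Hdouble : Un_cv (fun m => zeta2_sum (2 * m)) l).
  { intros eps Heps. destruct (Hl eps Heps) as [N HN]. exists N. intros m Hm. apply HN; lia. }
  assert (Hodd : Un_cv odd_sq_sum (l - / 4 * l)).
  { apply Un_cv_ext with (fun m => zeta2_sum (2 * m) - / 4 * zeta2_sum m).
    - intros m. rewrite zeta2_sum_double. ring.
    - apply CV_minus, CV_mult; auto. apply Un_cv_const. }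
  pose proof (UL_sequence _ _ _ Hodd odd_sq_sum_cv).
  replace (PI ^ 2 / 6) with l by lra. exact Hl.
Qed.

Lemma hyperharmonic_0_succ n : hyperharmonic 0 (S n) = / INR (S n).
Proof. reflexivity. Qed.

Lemma hyperharmonic_succ_0 r : hyperharmonic (S r) 0 = 0.
Proof. reflexivity. Qed.

Lemma hyperharmonic_succ r n :
  hyperharmonic (S r) (S n) = hyperharmonic (S r) n + hyperharmonic r (S n).
Proof. reflexivity. Qed.

Lemma hyperharmonic_nonneg r n : 0 <= hyperharmonic r n.
Proof.
  revert n; induction r as [|r IHr]; intros n.
  - destruct n; [simpl; lra|].
    rewrite hyperharmonic_0_succ; apply Rlt_le, Rinv_0_lt_compat, lt_0_INR; lia.
  - induction n as [|n IHn]; [rewrite hyperharmonic_succ_0; lra|].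
    rewrite hyperharmonic_succ; pose proof (IHr (S n)); lra.
Qed.

Lemma hyperharmonic_le_pow_harmonic r m :
  hyperharmonic (S r) m <= INR m ^ r * hyperharmonic 1 m.
Proof.
  revert m; induction r as [|r IHr]; intros m; [simpl; lra|].
  induction m as [|m IHm]; [rewrite !hyperharmonic_succ_0; lra|].
  pose proof (IHr (S m)) as Hr.
  rewrite hyperharmonic_succ; rewrite (hyperharmonic_succ 0 m) in Hr |- *.
  set (Hm := hyperharmonic 1 m) in *; set (d := hyperharmonic 0 (S m)) in *.
  assert (0 <= Hm) by apply hyperharmonic_nonneg.
  assert (0 <= d) by apply hyperharmonic_nonneg.
  assert (Hpow : INR m ^ r <= INR (S m) ^ r)
    by (apply pow_incr; split; [apply pos_INR | apply le_INR; lia]).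
  assert (INR m * (INR m ^ r * Hm) <= INR m * (INR (S m) ^ r * (Hm + d))).
  { apply Rmult_le_compat_l; [apply pos_INR|].
    apply Rmult_le_compat; try lra; apply pow_le, pos_INR. }
  rewrite S_INR in *. simpl pow in *.
  replace ((INR m + 1) * (INR m + 1) ^ r * (Hm + d))
    with (INR m * ((INR m + 1) ^ r * (Hm + d)) + (INR m + 1) ^ r * (Hm + d)) by ring.
  replace (INR m * INR m ^ r * Hm) with (INR m * (INR m ^ r * Hm)) in IHm by ring.
  lra.
Qed.

Lemma harmonic_psum m : hyperharmonic 1 m = psum (fun k => / INR (S k)) m.
Proof.
  induction m as [|m IH]; [reflexivity|].
  rewrite hyperharmonic_succ, IH. reflexivity.
Qed.

(* H_m / m -> 0, by Cesaro's lemma applied to 1/(k+1) -> 0. *)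
Lemma harmonic_over_n_cv : Un_cv (fun n => hyperharmonic 1 n / INR n) 0.
Proof.
  apply Un_cv_ext with (fun n => sum_f_R0 (fun k => / INR (S k)) (pred n) / INR n).
  - intros [|n]; [simpl; unfold Rdiv; rewrite Rinv_0; ring|].
    rewrite sum_f_R0_psum, harmonic_psum. reflexivity.
  - apply Cesaro_1, cv_infty_cv_0. intros M.
    destruct (INR_unbounded M) as [N HN]. exists N. intros n Hn.
    apply Rlt_le_trans with (INR N); [lra|]. apply le_INR; lia.
Qed.

Lemma rising_prod_pos n r : (0 < n)%nat -> 0 < rising_prod n r.
Proof.
  intros Hn; induction r as [|r IH]; simpl.
  - apply lt_0_INR; exact Hn.
  - apply Rmult_lt_0_compat; [exact IH | apply lt_0_INR; lia].
Qed.

Lemma rising_prod_shift n r :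
  rising_prod (S n) r * INR n = rising_prod n r * INR (n + S r).
Proof.
  induction r as [|r IH]; cbn [rising_prod].
  - rewrite S_INR, plus_INR; simpl; ring.
  - transitivity (rising_prod (S n) r * INR n * INR (S n + S r)); [ring|].
    rewrite IH. replace (S n + S r)%nat with (n + S (S r))%nat by lia. ring.
Qed.

Lemma rising_prod_ge_pow n r : INR n ^ S r <= rising_prod n r.
Proof.
  induction r as [|r IH]; cbn [rising_prod]; [simpl; lra|].
  rewrite <- tech_pow_Rmult, Rmult_comm.
  apply Rmult_le_compat; [apply pow_le, pos_INR | apply pos_INR | exact IH |].
  apply le_INR; lia.
Qed.

Lemma rising_prod_telescope n r : (0 < n)%nat ->
  INR (S r) / rising_prod n (S r) = / rising_prod n r - / rising_prod (S n) r.
Proof.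
  intros Hn.
  pose proof (rising_prod_pos n r Hn). pose proof (rising_prod_pos (S n) r ltac:(lia)).
  pose proof (rising_prod_shift n r) as Hshift.
  assert (0 < INR n) by (apply lt_0_INR; exact Hn).
  assert (0 < INR (n + S r)) by (apply lt_0_INR; lia).
  change (rising_prod n (S r)) with (rising_prod n r * INR (n + S r)).
  replace (/ rising_prod (S n) r) with (INR n / (rising_prod n r * INR (n + S r)))
    by (rewrite <- Hshift; field; lra).
  rewrite plus_INR in *. field. lra.
Qed.

Definition hh_partial_sum (r N : nat) : R :=
  sum_f_R0 (fun k => hyperharmonic r (S k) / rising_prod (S k) r) N.

(* The boundary term left over by summation by parts. *)
Definition hh_remainder (r N : nat) : R :=
  hyperharmonic (S r) (S N) / rising_prod (S (S N)) r.

Lemma hh_partial_sum_by_parts r N :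
  INR (S r) * hh_partial_sum (S r) N = hh_partial_sum r N - hh_remainder r N.
Proof.
  unfold hh_partial_sum, hh_remainder.
  induction N as [|N IH]; cbn [sum_f_R0].
  - rewrite hyperharmonic_succ, hyperharmonic_succ_0, Rplus_0_l.
    transitivity (hyperharmonic r 1 * (INR (S r) / rising_prod 1 (S r))).
    + field. apply Rgt_not_eq, rising_prod_pos; lia.
    + rewrite rising_prod_telescope by lia. field.
      split; apply Rgt_not_eq, rising_prod_pos; lia.
  - rewrite Rmult_plus_distr_l, IH, (hyperharmonic_succ r (S N)).
    transitivity (sum_f_R0 (fun k => hyperharmonic r (S k) / rising_prod (S k) r) N
      - hyperharmonic (S r) (S N) / rising_prod (S (S N)) r
      + (hyperharmonic (S r) (S N) + hyperharmonic r (S (S N)))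
        * (INR (S r) / rising_prod (S (S N)) (S r))).
    + field. split; apply Rgt_not_eq, rising_prod_pos; lia.
    + rewrite rising_prod_telescope by lia. field.
      split; apply Rgt_not_eq, rising_prod_pos; lia.
Qed.

Lemma hh_remainder_bound r N :
  0 <= hh_remainder r N <= hyperharmonic 1 (S N) / INR (S N).
Proof.
  unfold hh_remainder. set (a := INR (S N)).
  assert (Ha : 0 < a) by (apply lt_0_INR; lia).
  pose proof (rising_prod_pos (S (S N)) r ltac:(lia)) as Hpos.
  pose proof (hyperharmonic_nonneg (S r) (S N)).
  pose proof (hyperharmonic_le_pow_harmonic r (S N)) as Hh; fold a in Hh.
  assert (Hrise : a ^ S r <= rising_prod (S (S N)) r).
  { apply Rle_trans with (INR (S (S N)) ^ S r); [|apply rising_prod_ge_pow].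
    apply pow_incr; split; [lra | apply le_INR; lia]. }
  assert (0 < a ^ r) by (apply pow_lt; exact Ha).
  split; [apply Rmult_le_pos; [lra | apply Rlt_le, Rinv_0_lt_compat; exact Hpos]|].
  apply Rle_trans with (a ^ r * hyperharmonic 1 (S N) / a ^ S r).
  - unfold Rdiv. apply Rmult_le_compat; try lra.
    + apply Rlt_le, Rinv_0_lt_compat; exact Hpos.
    + apply Rinv_le_contravar; [apply pow_lt|]; lra.
  - right. rewrite <- tech_pow_Rmult. field. lra.
Qed.

Lemma hh_remainder_cv r : Un_cv (hh_remainder r) 0.
Proof.
  apply Un_cv_squeeze_0 with (fun N => hyperharmonic 1 (S N) / INR (S N)).
  - apply hh_remainder_bound.
  - apply Un_cv_ext with (fun N => hyperharmonic 1 (N + 1) / INR (N + 1)).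
    + intros N. rewrite Nat.add_1_r. reflexivity.
    + exact (CV_shift' _ 1 0 harmonic_over_n_cv).
Qed.

Lemma hh_partial_sum_0_cv : Un_cv (hh_partial_sum 0) (PI ^ 2 / 6).
Proof.
  apply Un_cv_ext with (fun N => zeta2_sum (N + 1)).
  - intros N. unfold hh_partial_sum, zeta2_sum.
    rewrite Nat.add_1_r, sum_f_R0_psum. apply psum_ext. intros k _.
    rewrite hyperharmonic_0_succ. cbn [rising_prod].
    assert (0 < INR (S k)) by (apply lt_0_INR; lia). field. lra.
  - exact (CV_shift' _ 1 _ basel).
Qed.

Lemma hh_partial_sum_succ_cv r l :
  Un_cv (hh_partial_sum r) l -> Un_cv (hh_partial_sum (S r)) (l / INR (S r)).
Proof.
  intros Hl. assert (0 < INR (S r)) by (apply lt_0_INR; lia).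
  apply Un_cv_ext with (fun N => / INR (S r) * (hh_partial_sum r N - hh_remainder r N)).
  - intros N. rewrite <- hh_partial_sum_by_parts. field. lra.
  - replace (l / INR (S r)) with (/ INR (S r) * (l - 0)) by (field; lra).
    apply CV_mult; [apply Un_cv_const|]. apply CV_minus; [exact Hl | apply hh_remainder_cv].
Qed.

Theorem proposition6 (r : nat) :
  infinite_sum
    (fun k : nat => hyperharmonic r (S k) / rising_prod (S k) r)
    (PI ^ 2 / (6 * INR (Factorial.fact r))).
Proof.
  change (Un_cv (hh_partial_sum r) (PI ^ 2 / (6 * INR (Factorial.fact r)))).
  induction r as [|r IH].
  - replace (PI ^ 2 / (6 * INR (Factorial.fact 0))) with (PI ^ 2 / 6) by (simpl; field).
    exact hh_partial_sum_0_cv.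
  - replace (PI ^ 2 / (6 * INR (Factorial.fact (S r))))
      with (PI ^ 2 / (6 * INR (Factorial.fact r)) / INR (S r)).
    + exact (hh_partial_sum_succ_cv r _ IH).
    + pose proof (INR_fact_lt_0 r). assert (0 < INR (S r)) by (apply lt_0_INR; lia).
      rewrite fact_simpl, mult_INR. field. lra.
Qed.
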